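(* Let $\alpha$ be a unit speed Frenet curve in $\mathbb{E}^3$ with Frenet frame $\{T,N,B\}$, curvature $\kappa$ and torsion $\tau$, let $\beta$ be an osculating mate of $\alpha$, let $\theta(s)=\int\kappa ds$ be the antiderivative of $\kappa$ with $\beta'=\sin\theta\,T+\cos\theta\,N$, and let $d(s)=\|\beta(s)\|$ be the distance function of $\beta$. Then the position vector of $\beta$ is $$\beta=\left[\int\left(-\frac{\kappa}{\tau}h'+\sin\theta\right)ds\right]T-\frac{h'}{\tau}N+hB,\qquad\text{where } h(s)=\frac{(dd')'-1}{\tau\cos\theta}$$ (for a suitable antiderivative in the first coefficient).
   Context: $\alpha:I\to\mathbb{E}^3$ is parametrized by arclength $s$, with $T'=\kappa N$, $N'=-\kappa T+\tau B$, $B'=-\tau N$, $\kappa>0$. An osculating mate of $\alpha$ is a curve $\beta(s)=\int(x_1T+x_2N)ds$ with smooth $x_1,x_2$, $x_1^2+x_2^2=1$ and $\beta''\perp\mathrm{span}\{T,N\}$; $\beta$ is assumed to be a Frenet curve (so $\tau\cos\theta\neq0$). The prime denotes $d/ds$. *)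

From Stdlib Require Import Reals.
From Coquelicot Require Import Coquelicot.
Open Scope R_scope.

Record vec3 := V3 { vx : R; vy : R; vz : R }.

Definition vadd (u v : vec3) : vec3 := V3 (vx u + vx v) (vy u + vy v) (vz u + vz v).
Definition vscale (a : R) (v : vec3) : vec3 := V3 (a * vx v) (a * vy v) (a * vz v).
Definition dot (u v : vec3) : R := vx u * vx v + vy u * vy v + vz u * vz v.
Definition vnorm (v : vec3) : R := sqrt (dot v v).
Definition cross (u v : vec3) : vec3 :=
  V3 (vy u * vz v - vz u * vy v) (vz u * vx v - vx u * vz v) (vx u * vy v - vy u * vx v).

Definition in_interval (lo hi : Rbar) (s : R) : Prop :=
  Rbar_lt lo (Finite s) /\ Rbar_lt (Finite s) hi.

Definition vis_derive (f : R -> vec3) (s : R) (v : vec3) : Prop :=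
  is_derive (fun t => vx (f t)) s (vx v) /\
  is_derive (fun t => vy (f t)) s (vy v) /\
  is_derive (fun t => vz (f t)) s (vz v).

Definition vDerive (f : R -> vec3) (s : R) : vec3 :=
  V3 (Derive (fun t => vx (f t)) s) (Derive (fun t => vy (f t)) s) (Derive (fun t => vz (f t)) s).

Definition smooth_on (I : R -> Prop) (f : R -> R) : Prop :=
  forall (n : nat) (s : R), I s -> ex_derive_n f n s.

Definition vsmooth_on (I : R -> Prop) (f : R -> vec3) : Prop :=
  smooth_on I (fun t => vx (f t)) /\ smooth_on I (fun t => vy (f t)) /\
  smooth_on I (fun t => vz (f t)).

Definition frenet_curve (I : R -> Prop) (alpha T N B : R -> vec3) (kappa tau : R -> R) : Prop :=
  vsmooth_on I alpha /\ vsmooth_on I T /\ vsmooth_on I N /\ vsmooth_on I B /\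
  smooth_on I kappa /\ smooth_on I tau /\
  forall s, I s ->
    vis_derive alpha s (T s) /\
    dot (T s) (T s) = 1 /\ dot (N s) (N s) = 1 /\ dot (B s) (B s) = 1 /\
    dot (T s) (N s) = 0 /\ dot (T s) (B s) = 0 /\ dot (N s) (B s) = 0 /\
    B s = cross (T s) (N s) /\
    0 < kappa s /\
    vis_derive T s (vscale (kappa s) (N s)) /\
    vis_derive N s (vadd (vscale (- kappa s) (T s)) (vscale (tau s) (B s))) /\
    vis_derive B s (vscale (- tau s) (N s)).

Definition osculating_mate (I : R -> Prop) (T N : R -> vec3) (beta : R -> vec3) : Prop :=
  vsmooth_on I beta /\
  exists x1 x2 : R -> R,
    smooth_on I x1 /\ smooth_on I x2 /\
    forall s, I s ->
      x1 s ^ 2 + x2 s ^ 2 = 1 /\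
      vis_derive beta s (vadd (vscale (x1 s) (T s)) (vscale (x2 s) (N s))) /\
      dot (vDerive (vDerive beta) s) (T s) = 0 /\
      dot (vDerive (vDerive beta) s) (N s) = 0.

(* Write [P = sin(theta) T + cos(theta) N] for the unit tangent of the mate.  Because
   [theta' = kappa], the Frenet equations give [P' = tau cos(theta) B], and
   [d d' = <beta, P>] (half the derivative of [|beta|^2]).  Hence
   [(d d')' = 1 + tau cos(theta) <beta, B>], i.e. [h = <beta, B>], and then
   [h' = -tau <beta, N>] and [<beta, T>' = sin(theta) + kappa <beta, N>].  The formula is
   the expansion of [beta] in the orthonormal frame {T, N, B}, with [a = <beta, T>]. *)

From Stdlib Require Import Reals Lra Psatz.
From Coquelicot Require Import Coquelicot.
Open Scope R_scope.

Set Implicit Arguments.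
Unset Strict Implicit.

Lemma dot_addl u v w : dot (vadd u v) w = dot u w + dot v w.
Proof. destruct u, v, w; unfold dot; simpl; ring. Qed.

Lemma dot_addr u v w : dot w (vadd u v) = dot w u + dot w v.
Proof. destruct u, v, w; unfold dot; simpl; ring. Qed.

Lemma dot_scalel a u w : dot (vscale a u) w = a * dot u w.
Proof. destruct u, w; unfold dot; simpl; ring. Qed.

Lemma dot_scaler a u w : dot w (vscale a u) = a * dot w u.
Proof. destruct u, w; unfold dot; simpl; ring. Qed.

Lemma dot_comm u w : dot u w = dot w u.
Proof. destruct u, w; unfold dot; simpl; ring. Qed.

Lemma dot_self_ge0 u : 0 <= dot u u.
Proof. destruct u; unfold dot; simpl; nra. Qed.

Lemma dot_self_eq0 u : dot u u = 0 -> u = V3 0 0 0.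
Proof.
  destruct u as [a b c]; unfold dot; simpl; intro E.
  assert (a = 0) by nra; assert (b = 0) by nra; assert (c = 0) by nra.
  subst; reflexivity.
Qed.

Lemma lagrange_identity u v :
  dot (cross u v) (cross u v) + (dot u v) ^ 2 = dot u u * dot v v.
Proof. destruct u, v; unfold dot, cross; simpl; ring. Qed.

Lemma dot_cross_l u v : dot u (cross u v) = 0.
Proof. destruct u, v; unfold dot, cross; simpl; ring. Qed.

Lemma dot_cross_r u v : dot v (cross u v) = 0.
Proof. destruct u, v; unfold dot, cross; simpl; ring. Qed.

Lemma cross_cross u v w :
  cross u (cross v w) = vadd (vscale (dot u w) v) (vscale (- dot u v) w).
Proof. destruct u, v, w; unfold dot, cross, vadd, vscale; simpl; f_equal; ring. Qed.

Lemma vsub_eq0 u v : vadd u (vscale (-1) v) = V3 0 0 0 -> u = v.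
Proof.
  destruct u, v; unfold vadd, vscale; simpl; intro E.
  injection E as E1 E2 E3; f_equal; lra.
Qed.

(* For [w] orthogonal to [T], [N] and [T x N], [w x (T x N) = 0] by the
   double cross product, so Lagrange's identity forces [|w|^2 = 0]. *)
Lemma orthonormal_frame_decomposition v T N :
  dot T T = 1 -> dot N N = 1 -> dot T N = 0 ->
  v = vadd (vscale (dot v T) T)
        (vadd (vscale (dot v N) N) (vscale (dot v (cross T N)) (cross T N))).
Proof.
  intros HT HN HTN.
  assert (HB : dot (cross T N) (cross T N) = 1).
  { pose proof (lagrange_identity T N) as L; rewrite HT, HN, HTN in L; lra. }
  pose proof (dot_cross_l T N) as HTB; pose proof (dot_cross_r T N) as HNB.
  remember (cross T N) as B eqn:EB.
  apply vsub_eq0.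
  set (w := vadd v (vscale (-1)
              (vadd (vscale (dot v T) T) (vadd (vscale (dot v N) N) (vscale (dot v B) B))))).
  assert (Hw : forall e, dot w e = dot v e - (dot v T * dot T e + dot v N * dot N e
                                             + dot v B * dot B e)).
  { intro e; unfold w; rewrite !dot_addl, !dot_scalel, !dot_addl, !dot_scalel; ring. }
  assert (HwT : dot w T = 0).
  { rewrite Hw, (dot_comm N T), (dot_comm B T), HT, HTN, HTB; ring. }
  assert (HwN : dot w N = 0).
  { rewrite Hw, (dot_comm B N), HN, HTN, HNB; ring. }
  assert (HwB : dot w B = 0).
  { rewrite Hw, HB, HTB, HNB; ring. }
  apply dot_self_eq0.
  pose proof (lagrange_identity w B) as L.
  rewrite EB, cross_cross, <- EB, HwT, HwN, HwB, HB in L.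
  rewrite !dot_addl, !dot_addr, !dot_scalel, !dot_scaler in L; nra.
Qed.

Lemma is_derive_Rmult (f g : R -> R) x df dg :
  is_derive f x df -> is_derive g x dg ->
  is_derive (fun t : R => f t * g t) x (df * g x + f x * dg).
Proof. intros Hf Hg; exact (is_derive_mult f g x df dg Hf Hg Rmult_comm). Qed.

Lemma is_derive_Rplus (f g : R -> R) x df dg :
  is_derive f x df -> is_derive g x dg ->
  is_derive (fun t : R => f t + g t) x (df + dg).
Proof. intros Hf Hg; exact (is_derive_plus f g x df dg Hf Hg). Qed.

Lemma is_derive_sin_comp (f : R -> R) x df :
  is_derive f x df -> is_derive (fun t : R => sin (f t)) x (df * cos (f x)).
Proof. intro Hf; exact (is_derive_comp sin f x _ df (is_derive_sin (f x)) Hf). Qed.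

Lemma is_derive_cos_comp (f : R -> R) x df :
  is_derive f x df -> is_derive (fun t : R => cos (f t)) x (df * - sin (f x)).
Proof. intro Hf; exact (is_derive_comp cos f x _ df (is_derive_cos (f x)) Hf). Qed.

Lemma is_derive_eq (f : R -> R) (x l l' : R) : is_derive f x l -> l = l' -> is_derive f x l'.
Proof. now intros H <-. Qed.

Lemma vis_derive_eq f x v w :
  vis_derive f x v -> vx v = vx w -> vy v = vy w -> vz v = vz w -> vis_derive f x w.
Proof. unfold vis_derive; intros (H1 & H2 & H3) <- <- <-; now split; [|split]. Qed.

Lemma vis_derive_vadd u v x du dv :
  vis_derive u x du -> vis_derive v x dv ->
  vis_derive (fun t : R => vadd (u t) (v t)) x (vadd du dv).
Proof.
  intros (H1 & H2 & H3) (G1 & G2 & G3).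
  split; [|split]; simpl; apply is_derive_Rplus; assumption.
Qed.

Lemma vis_derive_vscale (f : R -> R) v x df dv :
  is_derive f x df -> vis_derive v x dv ->
  vis_derive (fun t : R => vscale (f t) (v t)) x (vadd (vscale df (v x)) (vscale (f x) dv)).
Proof.
  intros Hf (H1 & H2 & H3).
  split; [|split]; simpl; apply is_derive_Rmult; assumption.
Qed.

Lemma is_derive_dot u v x du dv :
  vis_derive u x du -> vis_derive v x dv ->
  is_derive (fun t : R => dot (u t) (v t)) x (dot du (v x) + dot (u x) dv).
Proof.
  intros (H1 & H2 & H3) (G1 & G2 & G3); unfold dot.
  eapply is_derive_eq.
  - apply is_derive_Rplus; [apply is_derive_Rplus|]; apply is_derive_Rmult; eassumption.
  - simpl; ring.
Qed.

(* At a zero of [f] the derivative of [|f|] may not exist; the identity still holds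
   there because both sides vanish. *)
Lemma vnorm_mul_Derive_vnorm f x v :
  vis_derive f x v -> vnorm (f x) * Derive (fun t => vnorm (f t)) x = dot (f x) v.
Proof.
  intro Hf; unfold vnorm.
  destruct (Rle_lt_or_eq_dec _ _ (dot_self_ge0 (f x))) as [Hpos | Hzero].
  - assert (Hd : is_derive (fun t : R => sqrt (dot (f t) (f t))) x
                   ((dot v (f x) + dot (f x) v) / (2 * sqrt (dot (f x) (f x))))).
    { apply (is_derive_sqrt (fun t => dot (f t) (f t))); [|exact Hpos].
      apply is_derive_dot; exact Hf. }
    rewrite (is_derive_unique _ _ _ Hd), (dot_comm v (f x)).
    pose proof (sqrt_lt_R0 _ Hpos); field; lra.
  - rewrite <- Hzero, sqrt_0, (dot_self_eq0 (eq_sym Hzero)).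
    unfold dot; simpl; ring.
Qed.

Lemma locally_eq_in_interval lo hi (f g : R -> R) x :
  (forall t, in_interval lo hi t -> f t = g t) -> in_interval lo hi x ->
  locally x (fun t => f t = g t).
Proof.
  intros Hfg Hx; apply (filter_imp _ _ Hfg).
  apply (open_and (T := R_UniformSpace) (fun u : R => Rbar_lt lo u) (fun u : R => Rbar_lt u hi));
    [apply open_Rbar_gt | apply open_Rbar_lt | exact Hx].
Qed.

Definition mate_tangent (T N : R -> vec3) (theta : R -> R) (t : R) : vec3 :=
  vadd (vscale (sin (theta t)) (T t)) (vscale (cos (theta t)) (N t)).

Section OsculatingMate.

Variables (I : R -> Prop) (alpha T N B beta : R -> vec3) (kappa tau theta : R -> R).

Hypothesis frenet : frenet_curve I alpha T N B kappa tau.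
Hypothesis theta_derive : forall s, I s -> is_derive theta s (kappa s).
Hypothesis beta_derive : forall s, I s -> vis_derive beta s (mate_tangent T N theta s).

Lemma frenet_frame_at s : I s ->
  dot (T s) (T s) = 1 /\ dot (N s) (N s) = 1 /\ dot (T s) (N s) = 0 /\
  dot (T s) (B s) = 0 /\ dot (N s) (B s) = 0 /\ B s = cross (T s) (N s) /\
  vis_derive T s (vscale (kappa s) (N s)) /\
  vis_derive N s (vadd (vscale (- kappa s) (T s)) (vscale (tau s) (B s))) /\
  vis_derive B s (vscale (- tau s) (N s)).
Proof.
  intro Hs; destruct frenet as (_ & _ & _ & _ & _ & _ & Hf).
  destruct (Hf s Hs) as (_ & HT & HN & _ & HTN & HTB & HNB & EB & _ & DT & DN & DB).
  tauto.
Qed.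

Lemma vis_derive_mate_tangent s : I s ->
  vis_derive (mate_tangent T N theta) s (vscale (tau s * cos (theta s)) (B s)).
Proof.
  intro Hs; destruct (frenet_frame_at Hs) as (_ & _ & _ & _ & _ & _ & DT & DN & _).
  eapply vis_derive_eq.
  - apply vis_derive_vadd; apply vis_derive_vscale;
      [apply is_derive_sin_comp, theta_derive, Hs | exact DT
      | apply is_derive_cos_comp, theta_derive, Hs | exact DN].
  - simpl; ring.
  - simpl; ring.
  - simpl; ring.
Qed.

Lemma is_derive_dot_mate_tangent s : I s ->
  is_derive (fun t : R => dot (beta t) (mate_tangent T N theta t)) s
    (1 + tau s * cos (theta s) * dot (beta s) (B s)).
Proof.
  intro Hs; destruct (frenet_frame_at Hs) as (HT & HN & HTN & _).
  eapply is_derive_eq.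
  - apply is_derive_dot; [apply beta_derive | apply vis_derive_mate_tangent]; exact Hs.
  - unfold mate_tangent.
    rewrite !dot_addl, !dot_addr, !dot_scalel, !dot_scaler, (dot_comm (N s) (T s)), HT, HN, HTN.
    pose proof (sin2_cos2 (theta s)) as E; unfold Rsqr in E; nra.
Qed.

Lemma is_derive_binormal_coord s : I s ->
  is_derive (fun t : R => dot (beta t) (B t)) s (- tau s * dot (beta s) (N s)).
Proof.
  intro Hs; destruct (frenet_frame_at Hs) as (_ & _ & _ & HTB & HNB & _ & _ & _ & DB).
  eapply is_derive_eq.
  - apply is_derive_dot; [apply beta_derive, Hs | exact DB].
  - unfold mate_tangent; rewrite !dot_addl, !dot_scalel, dot_scaler, HTB, HNB; ring.
Qed.

Lemma is_derive_tangent_coord s : I s ->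
  is_derive (fun t : R => dot (beta t) (T t)) s (sin (theta s) + kappa s * dot (beta s) (N s)).
Proof.
  intro Hs; destruct (frenet_frame_at Hs) as (HT & _ & HTN & _ & _ & _ & DT & _).
  eapply is_derive_eq.
  - apply is_derive_dot; [apply beta_derive, Hs | exact DT].
  - unfold mate_tangent.
    rewrite !dot_addl, !dot_scalel, dot_scaler, HT, (dot_comm (N s)), HTN; ring.
Qed.

End OsculatingMate.

Theorem theorem8 (lo hi : Rbar) (alpha T N B beta : R -> vec3)
  (kappa tau theta : R -> R) :
  frenet_curve (in_interval lo hi) alpha T N B kappa tau ->
  osculating_mate (in_interval lo hi) T N beta ->
  (* theta is an antiderivative of kappa with beta' = sin theta T + cos theta N *)
  (forall s, in_interval lo hi s -> is_derive theta s (kappa s)) ->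
  (forall s, in_interval lo hi s ->
     vis_derive beta s (vadd (vscale (sin (theta s)) (T s)) (vscale (cos (theta s)) (N s)))) ->
  (* beta is a Frenet curve *)
  (forall s, in_interval lo hi s -> tau s * cos (theta s) <> 0) ->
  let d := fun s => vnorm (beta s) in
  let h := fun s => (Derive (fun t => d t * Derive d t) s - 1) / (tau s * cos (theta s)) in
  exists a : R -> R,
    (forall s, in_interval lo hi s ->
       is_derive a s (- (kappa s / tau s) * Derive h s + sin (theta s))) /\
    (forall s, in_interval lo hi s ->
       beta s = vadd (vscale (a s) (T s))
                  (vadd (vscale (- (Derive h s / tau s)) (N s)) (vscale (h s) (B s)))).
Proof.
  intros Hfr _ Hth Hbeta Htc d h.
  pose proof (@locally_eq_in_interval lo hi) as Hloc.
  set (I := in_interval lo hi) in *.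
  assert (Hnz : forall s, I s -> cos (theta s) <> 0 /\ tau s <> 0).
  { intros s Hs; split; intro E; apply (Htc s Hs); rewrite E; ring. }
  assert (Hh : forall s, I s -> h s = dot (beta s) (B s)).
  { intros s Hs; unfold h.
    rewrite (Derive_ext_loc _ (fun t : R => dot (beta t) (mate_tangent T N theta t)))
      by (apply Hloc; [intros t Ht; apply vnorm_mul_Derive_vnorm, Hbeta, Ht | exact Hs]).
    rewrite (is_derive_unique _ _ _ (is_derive_dot_mate_tangent Hfr Hth Hbeta Hs)).
    field; apply Hnz, Hs. }
  assert (Hh' : forall s, I s -> Derive h s = - tau s * dot (beta s) (N s)).
  { intros s Hs.
    rewrite (Derive_ext_loc _ (fun t : R => dot (beta t) (B t))) by (apply Hloc; assumption).
    exact (is_derive_unique _ _ _ (is_derive_binormal_coord Hfr Hbeta Hs)). }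
  exists (fun t => dot (beta t) (T t)); split; intros s Hs.
  - eapply is_derive_eq; [exact (is_derive_tangent_coord Hfr Hbeta Hs)|].
    rewrite Hh' by exact Hs; field; apply Hnz, Hs.
  - destruct (frenet_frame_at Hfr Hs) as (HT & HN & HTN & _ & _ & EB & _).
    rewrite Hh, Hh' by exact Hs.
    replace (- (- tau s * dot (beta s) (N s) / tau s)) with (dot (beta s) (N s))
      by (field; apply Hnz, Hs).
    rewrite EB; exact (orthonormal_frame_decomposition (beta s) HT HN HTN).
Qed.
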